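(* Let $q(t)=t^2\log(t^2)$ for $t>0$ and, for an integer $k\ge2$, let $p^{2k-1}_{\mathrm{Tay}}$ be the Taylor polynomial of $q$ of order $2k-1$ about $t=1$. Then $p^{2k-1}_{\mathrm{Tay}}(t)\ge q(t)$ for all $t>0$. *)

From Stdlib Require Import Reals Factorial.
From Coquelicot Require Import Coquelicot.
Open Scope R_scope.

Definition q (t : R) : R := t ^ 2 * ln (t ^ 2).

(* Taylor polynomial of order n of f about a:
   sum_{j=0}^{n} f^{(j)}(a)/j! (t-a)^j.  (sum_f_R0 g n = g 0 + ... + g n) *)
Definition taylor_poly (f : R -> R) (a : R) (n : nat) (t : R) : R :=
  sum_f_R0 (fun j => Derive_n f j a / INR (fact j) * (t - a) ^ j) n.

From Stdlib Require Import Reals Factorial Lra Lia.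
From Coquelicot Require Import Coquelicot.
Open Scope R_scope.

(* By Taylor's theorem with Lagrange remainder, for a smooth f,
     f x = taylor_poly f a n x + (x - a)^(n+1) / (n+1)! * f^(n+1)(z)
   for some z between a and x, on either side of a.  When n+1 is even the
   factor (x - a)^(n+1) is nonnegative, so f lies below its Taylor polynomial
   of order n as soon as f^(n+1) <= 0 on the whole interval considered.
   For q(t) = t^2 ln(t^2) the derivatives are explicit: q''(x) = 2 ln(x^2) + 6
   and, for j >= 0, q^(j+3)(x) = 4 (-1)^j j! / x^(j+1).  With n = 2k-1 the
   relevant derivative is q^(2k)(x) = -4 (2k-3)! / x^(2k-2) < 0 (k >= 2). *)

(* Reversing the order of the factors in each summand of Coquelicot's
   Lagrange formula gives back [taylor_poly]. *)
Lemma taylor_poly_alt (f : R -> R) (a : R) (n : nat) (x : R) :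
  sum_f_R0 (fun j => (x - a) ^ j / INR (fact j) * Derive_n f j a) n =
  taylor_poly f a n x.
Proof.
  apply sum_eq => j _. field. apply INR_fact_neq_0.
Qed.

Lemma taylor_poly_center (f : R -> R) (a : R) (n : nat) :
  taylor_poly f a n a = f a.
Proof.
  unfold taylor_poly. induction n as [|n IH]; simpl.
  - field.
  - rewrite IH. replace (a - a) with 0 by ring. ring.
Qed.

(* (-1)^j squared is 1: the sign bookkeeping of the reflection s |-> -s. *)
Lemma neg_one_pow_sqr (j : nat) : (-1) ^ j * (-1) ^ j = 1.
Proof.
  rewrite <- Rpow_mult_distr. replace (-1 * -1) with 1 by ring. apply pow1.
Qed.

Section LagrangeBound.

Variables (f : R -> R) (lo hi : R).

Hypothesis smooth : forall s, lo < s < hi -> forall k, ex_derive_n f k s.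

(* Smoothness is an open condition, as required by Coquelicot's chain rules. *)
Lemma smooth_locally (s : R) : lo < s < hi ->
  locally s (fun y => forall k, ex_derive_n f k y).
Proof.
  intros Hs.
  apply (filter_imp (fun y => lo < y /\ y < hi)).
  - intros y Hy. apply smooth. exact Hy.
  - exact (open_and _ _ (open_gt lo) (open_lt hi) s Hs).
Qed.

(* Taylor's formula with Lagrange remainder, for a point x on either side
   of the centre a (the intermediate point z is only located in (lo, hi),
   which is all the sign argument needs); Coquelicot only provides the case
   a < x, and the case x < a follows by applying it to s |-> f (-s). *)
Lemma taylor_lagrange_two_sided (n : nat) (a x : R) :
  lo < a < hi -> lo < x < hi ->
  exists z, lo < z < hi /\
    f x = taylor_poly f a n x
          + (x - a) ^ S n / INR (fact (S n)) * Derive_n f (S n) z.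
Proof.
  intros Ha Hx.
  destruct (Rtotal_order a x) as [Hax|[<-|Hxa]].
  - destruct (Taylor_Lagrange f n a x Hax) as [z [Hz E]].
    { intros s Hs k _. apply smooth. lra. }
    exists z. split; [lra|]. rewrite E, taylor_poly_alt. reflexivity.
  - exists a. split; [exact Ha|].
    rewrite taylor_poly_center. replace (a - a) with 0 by ring.
    rewrite pow_i by lia. field. apply INR_fact_neq_0.
  - set (h := fun s => f (- s)).
    assert (Dh : forall j s, lo < - s < hi ->
                   Derive_n h j s = (-1) ^ j * Derive_n f j (- s)).
    { intros j s Hs. apply Derive_n_comp_opp.
      apply (filter_imp (fun y => forall k, ex_derive_n f k y));
        [auto | apply smooth_locally; exact Hs]. }
    destruct (Taylor_Lagrange h n (- a) (- x)) as [z [Hz E]]; [lra| |].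
    { intros s Hs k _. apply ex_derive_n_comp_opp.
      apply (filter_imp (fun y => forall k, ex_derive_n f k y));
        [auto | apply smooth_locally; lra]. }
    exists (- z). split; [lra|].
    unfold h in E at 1. rewrite Ropp_involutive in E. rewrite E.
    rewrite Dh by lra. rewrite <- taylor_poly_alt. f_equal.
    + apply sum_eq => j _. rewrite Dh, Ropp_involutive by lra.
      replace (- x - - a) with (-1 * (x - a)) by ring. rewrite Rpow_mult_distr.
      transitivity ((x - a) ^ j / INR (fact j) * Derive_n f j a * ((-1) ^ j * (-1) ^ j)).
      * field. apply INR_fact_neq_0.
      * rewrite neg_one_pow_sqr. ring.
    + replace (- x - - a) with (-1 * (x - a)) by ring. rewrite Rpow_mult_distr.
      set (D := Derive_n f (S n) (- z)).
      transitivity ((x - a) ^ S n / INR (fact (S n)) * D * ((-1) ^ S n * (-1) ^ S n)).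
      * field. apply INR_fact_neq_0.
      * rewrite neg_one_pow_sqr. ring.
Qed.

Lemma le_taylor_poly (n : nat) (a x : R) :
  Nat.Even (S n) -> (forall z, lo < z < hi -> Derive_n f (S n) z <= 0) ->
  lo < a < hi -> lo < x < hi -> f x <= taylor_poly f a n x.
Proof.
  intros [p Hp] Hneg Ha Hx.
  destruct (taylor_lagrange_two_sided n a x Ha Hx) as [z [Hz ->]].
  assert (Hpow : 0 <= (x - a) ^ S n / INR (fact (S n))).
  { apply Rdiv_le_0_compat; [|apply lt_0_INR, lt_O_fact].
    rewrite Hp, pow_mult. apply pow_le, pow2_ge_0. }
  assert (Hrem := Rmult_le_compat_l _ _ _ Hpow (Hneg z Hz)).
  lra.
Qed.

End LagrangeBound.

(* The derivatives of q, in closed form; the formula for j + 3 holds for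
   every j and drives the induction. *)
Definition dq (j : nat) (x : R) : R :=
  match j with
  | O => x ^ 2 * ln (x ^ 2)
  | 1%nat => 2 * x * ln (x ^ 2) + 2 * x
  | 2%nat => 2 * ln (x ^ 2) + 6
  | S (S (S n)) => 4 * (-1) ^ n * INR (fact n) / x ^ S n
  end.

Lemma is_derive_dq (j : nat) (x : R) : x <> 0 -> is_derive (dq j) x (dq (S j) x).
Proof.
  intros Hx.
  assert (Hx2 : 0 < x * (x * 1)) by (change (x * (x * 1)) with (x ^ 2); apply pow2_gt_0, Hx).
  destruct j as [|[|[|n]]]; cbv beta iota delta [dq].
  - auto_derive; [lra|]. simpl. field. exact Hx.
  - auto_derive; [lra|]. simpl. field. exact Hx.
  - auto_derive; [lra|]. simpl. field. exact Hx.
  - auto_derive; [exact (pow_nonzero x (S n) Hx)|].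
    change (match n with 0%nat => 1 | S _ => INR n + 1 end) with (INR (S n)).
    rewrite fact_simpl, mult_INR. simpl pow. field.
    split; [apply pow_nonzero|]; exact Hx.
Qed.

Lemma locally_nonzero (x : R) : x <> 0 -> locally x (fun y => y <> 0).
Proof.
  intros Hx.
  destruct (Rdichotomy _ _ Hx) as [Hneg|Hpos].
  - apply (filter_imp (fun y => y < 0)); [intros y Hy; lra | exact (open_lt 0 x Hneg)].
  - apply (filter_imp (fun y => 0 < y)); [intros y Hy; lra | exact (open_gt 0 x Hpos)].
Qed.

Lemma Derive_n_q (j : nat) (x : R) : x <> 0 -> Derive_n q j x = dq j x.
Proof.
  revert x. induction j as [|j IH]; intros x Hx; [reflexivity|].
  simpl. rewrite (Derive_ext_loc _ (dq j)).
  - apply is_derive_unique, is_derive_dq, Hx.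
  - apply (filter_imp (fun y => y <> 0)); [|apply locally_nonzero, Hx].
    intros y Hy. apply IH, Hy.
Qed.

Lemma ex_derive_n_q (j : nat) (x : R) : x <> 0 -> ex_derive_n q j x.
Proof.
  intros Hx. destruct j as [|j]; [exact I|]. simpl.
  apply (ex_derive_ext_loc (dq j)).
  - apply (filter_imp (fun y => y <> 0)); [|apply locally_nonzero, Hx].
    intros y Hy. symmetry. apply Derive_n_q, Hy.
  - eexists. apply is_derive_dq, Hx.
Qed.

Lemma Derive_n_q_even_neg (k : nat) (x : R) :
  (2 <= k)%nat -> x <> 0 -> Derive_n q (2 * k) x < 0.
Proof.
  intros Hk Hx. rewrite Derive_n_q by exact Hx.
  destruct k as [|[|m]]; [lia|lia|].
  replace (2 * S (S m))%nat with (S (S (S (S (2 * m))))) by lia.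
  cbv beta iota delta [dq]. rewrite pow_1_odd.
  assert (Hfact : 0 < INR (fact (S (2 * m)))) by apply lt_0_INR, lt_O_fact.
  assert (Hden : 0 < x ^ S (S (2 * m))).
  { replace (S (S (2 * m))) with (2 * S m)%nat by lia.
    rewrite pow_mult. apply pow_lt, pow2_gt_0, Hx. }
  assert (Hinv : 0 < / x ^ S (S (2 * m))) by (apply Rinv_0_lt_compat, Hden).
  unfold Rdiv. nra.
Qed.

Theorem mainTheorem11 (k : nat) (hk : (2 <= k)%nat) (t : R) (ht : 0 < t) :
  taylor_poly q 1 (2 * k - 1) t >= q t.
Proof.
  assert (Horder : S (2 * k - 1) = (2 * k)%nat) by lia.
  apply Rle_ge, (le_taylor_poly q 0 (t + 2)).
  - intros s Hs j. apply ex_derive_n_q. lra.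
  - rewrite Horder. exists k. reflexivity.
  - intros z Hz. rewrite Horder. apply Rlt_le, Derive_n_q_even_neg; [exact hk|lra].
  - lra.
  - lra.
Qed.
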